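(* Let $T$ be a basic maximal rigid object of $\mathcal{C}_n$ with top summand $T_1=(1,n-1)$, and let $X\in\mathcal{F}$. If both $\sigma^{\mathcal{T}}_X$ and $\sigma^{\mathcal{D}}_X$ are non-zero strings, then there is a $\mathcal{D}$-arrow $\beta_X$ in the quiver of $\Lambda_T$ from the end vertex of $\sigma^{\mathcal{T}}_X$ to the end vertex of $\sigma^{\mathcal{D}}_X$; in particular $(\sigma^{\mathcal{D}}_X)^{-1}\beta_X\sigma^{\mathcal{T}}_X$ is a well-defined string.
   Context: Let $k$ be algebraically closed, $n\ge2$, $\mathcal{T}_n$ the tube of rank $n$ (finite-dimensional nilpotent representations of the cyclically oriented $\tilde A_{n-1}$-quiver; AR-translation $\tau$), $\mathcal{C}_n=D^b(\mathcal{T}_n)/\tau^{-1}[1]$ the cluster tube, with indecomposables identified with those of $\mathcal{T}_n$. Indecomposables have coordinates $(a,b)$, $a\in\mathbb{Z}/n$ (represented in $\{1,\dots,n\}$), $b\ge1$ the quasilength, with $\tau(a,b)=(a-1,b)$ and irreducible maps $(a,b)\to(a,b+1)$, $(a,b)\to(a+1,b-1)$. For indecomposables $X,Y$, $\operatorname{Hom}_{\mathcal{C}_n}(X,Y)=\operatorname{Hom}_{\mathcal{T}_n}(X,Y)\oplus\operatorname{Hom}_{D^b}(X,\tau^{-1}Y[1])$; elements of the first summand are $\mathcal{T}$-maps, of the second $\mathcal{D}$-maps. $R^{\mathcal{T}}(X)$ (resp. $R^{\mathcal{D}}(X)$) is the set of indecomposables with a nonzero $\mathcal{T}$-map (resp.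 $\mathcal{D}$-map) to $X$. $T=\bigoplus_{i=1}^{n-1}T_i$ is basic maximal rigid ($\operatorname{Ext}^1(T,T)=0$ and $\operatorname{Ext}^1(T\oplus Z,T\oplus Z)=0\Rightarrow Z\in\operatorname{add}T$); its unique summand of quasilength $n-1$ (top summand) is, by choice of coordinates, $T_1=(1,n-1)$. $\mathcal{F}$ is the set of indecomposables $(a,b)$, $a\in\{1,\dots,n\}$, with $b\le n-1$ or $a+b\le2n-1$. The quiver of $\Lambda_T=\operatorname{End}_{\mathcal{C}_n}(T)^{\mathrm{op}}$ has a vertex for each $T_i$ and arrows $i\to j$ for maps $T_j\to T_i$ irreducible in $\operatorname{add}T$; the arrow is a $\mathcal{D}$-arrow if that map is a $\mathcal{D}$-map. A string is a trivial string at a vertex, or a word in arrows and formal inverses with matching endpoints, no letter followed by its inverse, and no subword of it or its inverse a zero relation of $\Lambda_T$. For $*\in\{\mathcal{T},\mathcal{D}\}$: if $R^*(X)\cap\operatorname{add}T\neq\emptyset$, $\sigma^*_X$ denotes the unique string that traverses exactly the vertices of the summands of $T$ in $R^*(X)$, each exactly once, and ends at the vertex of the one of highest quasilength; otherwise $\sigma^*_X$ is the zero string. *)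

From Stdlib Require List.
From mathcomp Require Import all_boot.
Set Implicit Arguments. Unset Strict Implicit. Unset Printing Implicit Defensive.

(* Indecomposables (a,b): a in Z/n represented in {1..n}, b >= 1 quasilength *)
Definition obj := (nat * nat)%type.
Definition valid_obj (n : nat) (X : obj) : bool := (1 <= X.1 <= n) && (0 < X.2).

Definition tau (n : nat) (X : obj) : obj :=
  (if X.1 <= 1 then n else X.1.-1, X.2).

(* Model of the tube: (a,b) is the uniserial nilpotent representation with
   composition factors (from socle up) a, a+1, ..., a+b-1 (mod n); its
   submodule of length l is (a,l), its quotient of length l is (a+b-l,l).
   Hom_T(X,Y) has the basis {f_l} where f_l : X ->> (quotient of length l)
   = (submodule of length l) >-> Y, i.e. indices l with 1 <= l <= min(b_X,b_Y)
   and a_X + b_X - l = a_Y (mod n). *)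
Definition homT_idx (n : nat) (X Y : obj) (l : nat) : bool :=
  [&& 1 <= l, l <= minn X.2 Y.2 & X.1 + X.2 == Y.1 + l %[mod n]].

(* D-maps X -> Y : Hom_{D^b}(X, tau^-1 Y [1]) = Ext^1_T(X, tau^-1 Y)
   = D Hom_T(Y, tau^2 X) (AR duality); basis = dual basis of Hom_T(Y,tau^2 X). *)
Definition homD_idx (n : nat) (X Y : obj) (m : nat) : bool :=
  homT_idx n Y (tau n (tau n X)) m.

(* basis morphisms of Hom_C(X,Y) = Hom_T(X,Y) (+) Hom_D(X, tau^-1 Y[1]) *)
Inductive kind := KT | KD.
Definition kind_eqb (k k' : kind) : bool :=
  match k, k' with KT, KT | KD, KD => true | _, _ => false end.
Definition mor := (kind * nat)%type.

Definition valid_mor (n : nat) (X Y : obj) (f : mor) : bool :=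
  match f.1 with KT => homT_idx n X Y f.2 | KD => homD_idx n X Y f.2 end.

(* Composition g o f of basis morphisms f : X -> Y, g : Y -> Z.  It is a
   nonzero multiple of a basis morphism, or zero (None).
   - T o T : f_l then g_m gives the T-basis element of index l+m-b_Y (if >0);
   - T-map h_l : Y -> Z after D-map d_m : X -> Y gives d_(m+b_Z-l)
     (transpose of precomposition with h_l on Hom_T(-,tau^2 X));
   - D-map d_m : Y -> Z after T-map h_l : X -> Y gives d_(m+b_X-l)
     (transpose of postcomposition with tau^2 h_l);
   - D o D = 0 (hereditary). *)
Definition comp (n : nat) (X Y Z : obj) (f g : mor) : option mor :=
  match f, g with
  | (KT, l), (KT, m) => if Y.2 < l + m then Some (KT, l + m - Y.2) else None
  | (KD, m), (KT, l) =>
      if homD_idx n X Z (m + Z.2 - l) then Some (KD, m + Z.2 - l) else None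
  | (KT, l), (KD, m) =>
      if homD_idx n X Z (m + X.2 - l) then Some (KD, m + X.2 - l) else None
  | (KD, _), (KD, _) => None
  end.

Definition rad_mor (n : nat) (X Y : obj) (f : mor) : Prop :=
  valid_mor n X Y f /\ ~ (X = Y /\ f = (KT, X.2)).

(* Ext^1_C(X,Y) = Ext^1_T(X,Y) (+) Hom_T(X, tau Y), and
   Ext^1_T(X,Y) = D Hom_T(Y, tau X). *)
Definition extC_zero (n : nat) (X Y : obj) : Prop :=
  (forall l, ~~ homT_idx n Y (tau n X) l) /\ (forall l, ~~ homT_idx n X (tau n Y) l).

(* objects of C_n = finite lists of indecomposables (direct sums) *)
Definition rigid (n : nat) (S : seq obj) : Prop :=
  forall X Y, X \in S -> Y \in S -> extC_zero n X Y.

Definition basic_maximal_rigid (n : nat) (T : seq obj) : Prop :=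
  [/\ size T = n.-1, uniq T, all (valid_obj n) T, rigid n T &
      forall Z : seq obj, all (valid_obj n) Z -> rigid n (T ++ Z) ->
        all (fun Y => Y \in T) Z].

Definition inF (n : nat) (X : obj) : Prop :=
  valid_obj n X /\ (X.2 <= n.-1 \/ X.1 + X.2 <= 2 * n - 1).

Definition inRT (n : nat) (X Y : obj) : Prop := exists l, homT_idx n Y X l.
Definition inRD (n : nat) (X Y : obj) : Prop := exists m, homD_idx n Y X m.

(* Quiver of Lambda_T = End_C(T)^op: vertices = summands of T; an arrow
   i -> j for each basis morphism T_j -> T_i of the radical of add T not in
   rad^2 (composites of basis morphisms being basis morphisms or zero). *)
Record arrow := Arrow { asrc : obj; atgt : obj; amor : mor }.

Definition irr_addT (n : nat) (T : seq obj) (X Y : obj) (f : mor) : Prop :=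
  [/\ X \in T, Y \in T, rad_mor n X Y f &
      ~ exists Z g h, [/\ Z \in T, rad_mor n X Z g, rad_mor n Z Y h &
                          comp n X Z Y g h = Some f]].

Definition is_arrow (n : nat) (T : seq obj) (a : arrow) : Prop :=
  irr_addT n T (atgt a) (asrc a) (amor a).

Definition is_Darrow (n : nat) (T : seq obj) (a : arrow) : Prop :=
  is_arrow n T a /\ (amor a).1 = KD.

(* composite of a path a_1 a_2 ... a_r (a_t : i_(t-1) -> i_t), i.e. of the
   map T_(i_r) -> T_(i_0); returns (T_(i_r), map) or None if zero. *)
Fixpoint pcomp (n : nat) (p : seq arrow) : option (obj * mor) :=
  match p with
  | [::] => None
  | [:: a] => Some (atgt a, amor a)
  | a :: p' =>
      match pcomp n p' with
      | Some (e, g) =>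
          match comp n e (atgt a) (asrc a) g (amor a) with
          | Some h => Some (e, h)
          | None => None
          end
      | None => None
      end
  end.

Fixpoint is_path (p : seq arrow) : Prop :=
  match p with
  | a :: ((b :: _) as p') => atgt a = asrc b /\ is_path p'
  | _ => True
  end.

Definition all_arrows (n : nat) (T : seq obj) (p : seq arrow) : Prop :=
  forall a, List.In a p -> is_arrow n T a.

Definition zero_relation (n : nat) (T : seq obj) (p : seq arrow) : Prop :=
  [/\ 2 <= size p, all_arrows n T p, is_path p & pcomp n p = None].

(* Words/strings, represented as walks: a start vertex and a list of letters
   (arrow, true) = the arrow, (arrow, false) = its formal inverse.  The walk
   traverses the letters in order (so the paper's word u_k ... u_1, written
   in composition order, is the list [:: u_1; ...; u_k]). *)
Definition letter := (arrow * bool)%type.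
Definition dummy_letter : letter := (Arrow (0,0) (0,0) (KT,0), true).
Definition lnth (l : seq letter) (i : nat) : letter := List.nth i l dummy_letter.
Definition lsrc (x : letter) : obj := if x.2 then asrc x.1 else atgt x.1.
Definition ltgt (x : letter) : obj := if x.2 then atgt x.1 else asrc x.1.
Definition walk := (obj * seq letter)%type.

Fixpoint walk_from (v : obj) (w : seq letter) : Prop :=
  match w with
  | [::] => True
  | x :: w' => lsrc x = v /\ walk_from (ltgt x) w'
  end.

Definition wverts (s : walk) : seq obj := s.1 :: map ltgt s.2.
Definition wend (s : walk) : obj := last s.1 (map ltgt s.2).

Definition winv (s : walk) : walk :=
  (wend s, map (fun x : letter => (x.1, ~~ x.2)) (rev s.2)).

Definition is_string (n : nat) (T : seq obj) (s : walk) : Prop :=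
  [/\ s.1 \in T,
      walk_from s.1 s.2,
      (forall x, List.In x s.2 -> is_arrow n T x.1),
      (forall i, i.+1 < size s.2 ->
         ~ ((lnth s.2 i).1 = (lnth s.2 i.+1).1 /\ (lnth s.2 i).2 <> (lnth s.2 i.+1).2))
    &
      (forall i k, let u := take k (drop i s.2) in
         (all snd u -> ~ zero_relation n T (map fst u)) /\
         (all (fun x : letter => ~~ x.2) u -> ~ zero_relation n T (rev (map fst u))))].

Definition is_sigma (n : nat) (T : seq obj) (R : obj -> Prop) (s : walk) : Prop :=
  [/\ is_string n T s,
      uniq (wverts s),
      (forall Y, Y \in wverts s <-> (Y \in T /\ R Y))
    & (forall Y, Y \in T -> R Y -> Y.2 <= (wend s).2)].

(* Rigidity together with the top summand [(1, n-1)] puts every summand of [T]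
   in the wing of [(1, n-1)], where an indecomposable [(a, b)] is the interval
   [[a, a + b)] and two summands are either nested or separated by a gap.  The
   summands in R^T(X), resp. R^D(X), share a common point, so they form a chain
   under the end [A] of sigma^T_X, resp. [B] of sigma^D_X.  Walking towards [A]
   along sigma^T_X, each arrow traversed forwards is an epi between summands
   ending where [A] ends; walking away from [B] along the inverse of sigma^D_X,
   each is a mono between summands starting where [B] starts.  If [X] lies in
   the wing, maximality of [T] makes [B] start right after [A] ends and beta is
   the D-map [B -> A] of index 1; otherwise [A = B = (1, n-1)] and beta is the
   D-loop there.  Either way beta is irreducible in add T, and composing it
   with those epis and monos keeps a nonzero D-map of index 1, so the
   concatenation contains no zero relation. *)
From Pilot Require Import Defs.
From mathcomp Require Import all_boot zify.
Set Implicit Arguments. Unset Strict Implicit.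

Lemma eq_mod_lt3 n p q : p = q %[mod n] -> 0 < n -> p < 3 * n -> q < 3 * n ->
  p = q \/ p = q + n \/ q = p + n \/ p = q + 2 * n \/ q = p + 2 * n.
Proof.
move=> eq_pq n_gt0 p_lt q_lt.
have := divn_eq p n; have := divn_eq q n.
have : p %/ n < 3 by rewrite ltn_divLR.
have : q %/ n < 3 by rewrite ltn_divLR.
move: eq_pq; case: (p %/ n) => [|[|[|?]]]; case: (q %/ n) => [|[|[|?]]] //=; lia.
Qed.

(* The wing of [(1, n-1)].  Reading [Y] as the interval [Y.1, Y.1 + Y.2) of
   [1, n], all Hom- and Ext-spaces between objects of the wing are governed
   by the relative position of their intervals. *)
Definition wing n (Y : obj) := [/\ 1 <= Y.1, 1 <= Y.2 & Y.1 + Y.2 <= n].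

(* [X] starts strictly inside or just after the end of [Y] and ends after it:
   exactly the configurations with [Hom(Y, tau X) <> 0]. *)
Definition cross (X Y : obj) :=
  [/\ 2 <= X.1, Y.1 < X.1, X.1 <= Y.1 + Y.2 & Y.1 + Y.2 < X.1 + X.2].

Section Wing.
Variable n : nat.
Hypothesis n_gt1 : 1 < n.

Lemma wing_top : wing n (1, n.-1).
Proof. by split => /=; lia. Qed.

Lemma homT_idx_nested Y Z :
  Y.1 <= Z.1 -> Z.1 < Y.1 + Y.2 -> Y.1 + Y.2 <= Z.1 + Z.2 ->
  homT_idx n Y Z (Y.1 + Y.2 - Z.1).
Proof.
move=> *; apply/and3P; split; try lia.
by apply/eqP; congr (_ %% _); lia.
Qed.

Lemma homT_idx_wing Y Z l : wing n Y -> wing n Z -> homT_idx n Y Z l ->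
  [/\ Y.1 <= Z.1, Z.1 < Y.1 + Y.2, Y.1 + Y.2 <= Z.1 + Z.2 & l = Y.1 + Y.2 - Z.1].
Proof.
case=> ? ? ? [? ? ?] /and3P[? ? /eqP eq_l].
have := eq_mod_lt3 eq_l; (try split); lia.
Qed.

Lemma tau2E Y : 1 <= Y.1 -> tau n (tau n Y) =
  (if Y.1 == 1 then n.-1 else if Y.1 == 2 then n else Y.1 - 2, Y.2).
Proof.
case: Y => [[|[|[|a]]] b] //= _; rewrite /tau /=.
by case: n n_gt1 => [|[|m]].
Qed.

Lemma homD_idx_wing Y Z m : wing n Y -> wing n Z -> homD_idx n Y Z m ->
  (3 <= Y.1 /\ Z.1 + 2 <= Y.1 /\ Y.1 <= Z.1 + Z.2 + 1 /\
   Z.1 + Z.2 + 2 <= Y.1 + Y.2 /\ m = Z.1 + Z.2 + 2 - Y.1) \/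
  (Y.1 = 1 /\ Z.1 + Z.2 = n /\ m = 1).
Proof.
case=> Y1 ? ? [? ? ?]; rewrite /homD_idx tau2E //.
case/and3P=> /= ? ? /eqP.
case: eqP => [->|?]; [|case: eqP => [->|?]] => eq_m;
  have := eq_mod_lt3 eq_m; (try split); lia.
Qed.

Lemma homD_idx_nested Y Z : 3 <= Y.1 -> Z.1 + 2 <= Y.1 <= Z.1 + Z.2 + 1 ->
  Z.1 + Z.2 + 2 <= Y.1 + Y.2 -> homD_idx n Y Z (Z.1 + Z.2 + 2 - Y.1).
Proof.
move=> ? ? ?; rewrite /homD_idx tau2E; last lia.
have -> : (Y.1 == 1) = false by apply/eqP; lia.
have -> : (Y.1 == 2) = false by apply/eqP; lia.
have -> : Z.1 + Z.2 + 2 - Y.1 = Z.1 + Z.2 - (Y.1 - 2) by lia.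
by apply: homT_idx_nested => /=; lia.
Qed.

Lemma homD_idx_top Y Z : wing n Y -> wing n Z -> Y.1 = 1 -> Z.1 + Z.2 = n ->
  homD_idx n Y Z 1.
Proof.
move=> [? ? ?] [? ? ?] Y1 ?; rewrite /homD_idx tau2E Y1 //=.
apply/and3P; split => /=; try lia.
by apply/eqP; congr (_ %% _); lia.
Qed.

Lemma cross_extC X Y : extC_zero n X Y -> ~ cross X Y.
Proof.
case=> noHom _ [? ? ? ?]; have /negP := noHom (Y.1 + Y.2 - X.1.-1); apply.
have -> : tau n X = (X.1.-1, X.2) by rewrite /tau; case: ifP => // ?; exfalso; lia.
by apply: homT_idx_nested => /=; lia.
Qed.

Lemma noHom_tau_wing X Y l : wing n X -> wing n Y -> ~ cross X Y ->
  ~~ homT_idx n Y (tau n X) l.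
Proof.
case=> ? ? ? [? ? ?] noX; apply/negP; rewrite /homT_idx /tau.
case: ifP => ? /and3P[/= ? ? /eqP eq_l]; have := eq_mod_lt3 eq_l; first lia.
by move=> ?; apply: noX; split; lia.
Qed.

Lemma extC_zero_wing X Y : wing n X -> wing n Y -> ~ cross X Y -> ~ cross Y X ->
  extC_zero n X Y.
Proof. by move=> wX wY *; split=> l; apply: noHom_tau_wing. Qed.

Lemma extC_zero_nested Y Z p : extC_zero n Y Z -> wing n Y -> wing n Z ->
  Y.1 <= p < Y.1 + Y.2 -> Z.1 <= p < Z.1 + Z.2 ->
  (Y.1 <= Z.1 /\ Z.1 + Z.2 <= Y.1 + Y.2) \/ (Z.1 <= Y.1 /\ Y.1 + Y.2 <= Z.1 + Z.2).
Proof.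
move=> eYZ [? ? ?] [? ? ?] ? ?.
have nYZ := cross_extC eYZ.
have nZY : ~ cross Z Y by apply: cross_extC; case: eYZ.
case: (ltngtP Y.1 Z.1) => ?; last lia.
- case: (leqP (Z.1 + Z.2) (Y.1 + Y.2)) => ?; first by left; lia.
  by exfalso; apply: nZY; split; lia.
- case: (leqP (Y.1 + Y.2) (Z.1 + Z.2)) => ?; first by right; lia.
  by exfalso; apply: nYZ; split; lia.
Qed.

(* A summand of length [>= n] has self-extensions, and one sticking out of
   the wing crosses the top summand. *)
Lemma rigid_wing (T : seq obj) (Y : obj) :
  rigid n T -> all (valid_obj n) T -> (1, n.-1) \in T -> Y \in T -> wing n Y.
Proof.
move=> rT vT T1 TY; have /andP[/andP[? ?] ?] := allP vT _ TY.
have short : Y.2 <= n.-1.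
  rewrite leqNgt; apply/negP => ?; have [noHom _] := rT _ _ TY TY.
  have /negP := noHom (Y.2.+1 - n); apply; rewrite /homT_idx /tau.
  case: ifP => ?; apply/and3P; split => /=; try lia; apply/eqP.
    by congr (_ %% _); lia.
  by rewrite -(modnDr (Y.1.-1 + (Y.2.+1 - n))); congr (_ %% _); lia.
split => //; rewrite leqNgt; apply/negP => ?.
by apply: (cross_extC (rT _ _ TY T1)); split => /=; lia.
Qed.

Lemma inRT_wingE X Y : wing n Y -> 1 <= X.1 <= n -> X.1 + X.2 <= 2 * n ->
  inRT n X Y <-> Y.1 <= X.1 < Y.1 + Y.2 /\ Y.1 + Y.2 <= X.1 + X.2.
Proof.
case=> ? ? ? /andP[? ?] ?; split.
  by case=> l /and3P[? ? /eqP eq_l]; have := eq_mod_lt3 eq_l; lia.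
by case=> /andP[? ?] ?; exists (Y.1 + Y.2 - X.1); apply: homT_idx_nested.
Qed.

Lemma inRD_wingE X Y : wing n Y -> 1 <= X.1 -> 1 <= X.2 -> X.1 + X.2 < n ->
  inRD n X Y <-> X.1 + 2 <= Y.1 <= X.1 + X.2 + 1 /\ X.1 + X.2 + 2 <= Y.1 + Y.2.
Proof.
move=> wY ? ? ?; have wX : wing n X by split; lia.
split; first by case=> m /(homD_idx_wing wY wX); lia.
by case=> ? ?; exists (X.1 + X.2 + 2 - Y.1); apply: homD_idx_nested => //; lia.
Qed.

Lemma inRD_wrap X Y : wing n Y -> 1 <= X.1 <= n -> n <= X.1 + X.2 < 2 * n ->
  inRD n X Y -> Y.1 <= X.1 + X.2 - n + 1 < Y.1 + Y.2.
Proof.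
case=> ? ? ? /andP[? ?] /andP[? ?] [m]; rewrite /homD_idx tau2E //.
case/and3P=> /= ? ? /eqP.
case: eqP => [->|?]; [|case: eqP => [->|?]] => eq_m; have := eq_mod_lt3 eq_m; lia.
Qed.

Lemma inRD_top X : 1 <= X.1 < n -> n <= X.1 + X.2 -> X.1 + X.2 + 2 <= 2 * n ->
  inRD n X (1, n.-1).
Proof.
move=> /andP[? ?] ? ?; exists (X.1 + X.2 - n + 1); rewrite /homD_idx tau2E //=.
apply/and3P; split => /=; try lia.
by apply/eqP; congr (_ %% _); lia.
Qed.

End Wing.

Lemma In_rev (A : Type) (x : A) s : List.In x (rev s) <-> List.In x s.
Proof.
by elim: s => [|y s IH] //; rewrite rev_cons -cats1 List.in_app_iff IH /=; tauto.
Qed.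

Lemma In_map (A B : Type) (f : A -> B) y s :
  List.In y (map f s) -> exists2 x, List.In x s & y = f x.
Proof.
elim: s => [|x s IH] //= [<-|/IH[z]]; first by exists x; [left|].
by exists z; [right|].
Qed.

Lemma In_nth (A : Type) (d : A) s i : i < size s -> List.In (nth d s i) s.
Proof. by elim: s i => [|x s IH] [|i] //= ?; [left | right; apply: IH]. Qed.

Lemma In_take (A : Type) (x : A) i s : List.In x (take i s) -> List.In x s.
Proof. by rewrite -{2}(cat_take_drop i s) List.in_app_iff; left. Qed.

Lemma In_drop (A : Type) (x : A) i s : List.In x (drop i s) -> List.In x s.
Proof. by rewrite -{2}(cat_take_drop i s) List.in_app_iff; right. Qed.

Lemma drop_take (A : Type) j m (s : seq A) : drop j (take m s) = take (m - j) (drop j s).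
Proof.
case: (leqP j m) => [le_jm|lt_mj]; first by rewrite take_drop subnK.
rewrite drop_oversize; last by rewrite size_take_min; lia.
have -> : m - j = 0 by lia.
by rewrite take0.
Qed.

Lemma lnthE w i : lnth w i = nth dummy_letter w i.
Proof. by elim: w i => [|x w IH] [|i] //=; rewrite /lnth /= -IH. Qed.

Definition flip (x : letter) : letter := (x.1, ~~ x.2).

Lemma lsrc_flip x : lsrc (flip x) = ltgt x.
Proof. by case: x => ? []. Qed.

Lemma ltgt_flip x : ltgt (flip x) = lsrc x.
Proof. by case: x => ? []. Qed.

Lemma walk_from_cat v w1 w2 :
  walk_from v (w1 ++ w2) <-> walk_from v w1 /\ walk_from (last v (map ltgt w1)) w2.
Proof.
elim: w1 v => [|x w1 IH] v /=; first by split => // [[]].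
by rewrite IH; split => [[? []]|[[? ?] ?]].
Qed.

Lemma walk_from_winv v w :
  walk_from v w -> walk_from (last v (map ltgt w)) (map flip (rev w)).
Proof.
elim/last_ind: w => [|w x IH] //.
rewrite -cats1 walk_from_cat /= => -[/IH ? [src_x _]].
by rewrite rev_cat !map_cat last_cat /= lsrc_flip ltgt_flip src_x.
Qed.

Lemma walk_arrow_ends v w x : walk_from v w -> uniq (v :: map ltgt w) -> List.In x w ->
  [/\ asrc x.1 \in v :: map ltgt w, atgt x.1 \in v :: map ltgt w & asrc x.1 <> atgt x.1].
Proof.
elim: w v => [|y w IH] v //= [<- hw] /andP[hv hu] [<-|hx].
  have /eqP ne : lsrc y != ltgt y by apply: contraNneq hv => ->; rewrite mem_head.
  by case: y ne {hv hw hu} => a []; rewrite /lsrc /ltgt /= => ne;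
    split; rewrite ?in_cons ?eqxx ?orbT // => E; apply: ne.
have [? ? ?] := IH _ hw hu hx.
by split => //; rewrite in_cons; apply/orP; right.
Qed.

Definition reduced (w : seq letter) : Prop :=
  forall i, i.+1 < size w ->
    ~ ((lnth w i).1 = (lnth w i.+1).1 /\ (lnth w i).2 <> (lnth w i.+1).2).

Definition zero_free n T (w : seq letter) : Prop :=
  forall i k, let u := take k (drop i w) in
    (all snd u -> ~ zero_relation n T (map fst u)) /\
    (all (fun x : letter => ~~ x.2) u -> ~ zero_relation n T (rev (map fst u))).

Lemma reduced_winv w : reduced w -> reduced (map flip (rev w)).
Proof.
move=> red i; rewrite size_map size_rev => lt_i; rewrite !lnthE.
rewrite !(nth_map dummy_letter) ?size_rev ?nth_rev; try lia.
have := red (size w - i.+2); rewrite !lnthE.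
have -> : (size w - i.+2).+1 = size w - i.+1 by lia.
by move=> nb [/= e ne]; apply: nb; [lia | split => // E; apply: ne; rewrite /= E].
Qed.

Lemma zero_free_winv n T w : zero_free n T w -> zero_free n T (map flip (rev w)).
Proof.
move=> zf i k /=; rewrite -map_drop -map_take drop_rev take_rev.
set j := (X in drop X _); set m := size w - i.
have [zf_dir zf_inv] := zf j (m - j).
rewrite drop_take -map_comp !map_rev revK !all_rev !all_map; split => all_u.
- exact: zf_inv.
- by apply: zf_dir; move: all_u; apply: sub_all => x; rewrite /= negbK.
Qed.

Lemma is_string_winv n T s : is_string n T s -> wend s \in T -> is_string n T (winv s).
Proof.
case=> _ walk_s arr_s red_s zf_s end_s; split => //.
- exact: walk_from_winv.
- by move=> x /= hx; have [y /In_rev /arr_s ? ->] := In_map hx.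
- exact: reduced_winv.
- exact: zero_free_winv.
Qed.

Lemma dropl_cat (A : Type) i (s1 s2 : seq A) :
  i <= size s1 -> drop i (s1 ++ s2) = drop i s1 ++ s2.
Proof.
rewrite leq_eqVlt => /orP[/eqP->|lt_i]; last by rewrite drop_cat lt_i.
by rewrite drop_size drop_size_cat.
Qed.

Lemma opposite_flip x y : y.1 = x.1 -> y.2 <> x.2 -> y = flip x.
Proof. by case: x y => a [] [b []] //= ->. Qed.

Lemma reduced_cat_letter s x W : reduced s -> reduced W ->
  ~ List.In (flip x) s -> ~ List.In (flip x) W -> reduced (s ++ x :: W).
Proof.
move=> red_s red_W nsx nWx i; rewrite size_cat /= => lt_i; rewrite !lnthE !nth_cat.
case: (ltnP i.+1 (size s)) => [lt_s|].
  by rewrite (ltnW lt_s); have := red_s i lt_s; rewrite !lnthE.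
rewrite leq_eqVlt => /orP[/eqP eq_s|].
  rewrite eq_s ltnSn subnn /= => -[e ne]; apply: nsx.
  by rewrite -(opposite_flip e ne); apply: In_nth; lia.
rewrite ltnS leq_eqVlt => /orP[/eqP eq_i|gt_s].
  rewrite -eq_i ltnn subnn (_ : (size s).+1 - size s = 1) /=; last lia.
  move=> [e ne]; apply: nWx; rewrite -(opposite_flip (esym e) (nesym ne)).
  by apply: In_nth; lia.
rewrite ltnNge (ltnW gt_s) /=.
have -> : i - size s = (i - size s).-1.+1 by lia.
have -> : i.+1 - size s = (i - size s).-1.+2 by lia.
by have := red_W (i - size s).-1; rewrite !lnthE; apply; lia.
Qed.

Lemma zero_free_cat_letter n T s a W : zero_free n T s -> zero_free n T W ->
  (forall i k, all snd (drop i s) -> all snd (take k W) ->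
     Defs.pcomp n (map fst (drop i s) ++ a :: map fst (take k W)) <> None) ->
  zero_free n T (s ++ (a, true) :: W).
Proof.
move=> zf_s zf_W comp_ne i k.
case: (leqP (i + k) (size s)) => [inside_s|across_s].
  by rewrite dropl_cat 1?takel_cat ?size_drop; [exact: zf_s | lia | lia].
case: (leqP i (size s)) => [le_i|gt_i]; last first.
  rewrite drop_cat ltnNge (ltnW gt_i) /=.
  have -> : i - size s = (i - size s).-1.+1 by lia.
  exact: zf_W.
rewrite dropl_cat // take_cat size_drop ltnNge.
have -> : size s - i <= k by lia.
have -> : k - (size s - i) = (k - (size s - i)).-1.+1 by lia.
rewrite /= !all_cat /= andbF; split=> // /andP[dir_s dir_W] [_ _ _].
by rewrite map_cat /=; apply: comp_ne.
Qed.

(* An arrow [a] stands for a map [atgt a -> asrc a]; [mono_arrow a] and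
   [epi_arrow a] say that this map is the canonical mono, resp. epi. *)
Definition mono_arrow (a : arrow) := amor a = (KT, (atgt a).2).
Definition epi_arrow (a : arrow) := amor a = (KT, (asrc a).2).

Lemma pcomp_cons n a b p : Defs.pcomp n [:: a, b & p] =
  if Defs.pcomp n (b :: p) is Some (e, g) then
    if Defs.comp n e (atgt a) (asrc a) g (amor a) is Some h then Some (e, h) else None
  else None.
Proof. by []. Qed.

Lemma pcomp_monos n (P : obj -> Prop) y Q :
  (forall z, List.In z (y :: Q) -> [/\ mono_arrow z, P (atgt z) & 0 < (atgt z).2]) ->
  exists2 e, Defs.pcomp n (y :: Q) = Some (e, (KT, e.2)) & P e /\ 0 < e.2.
Proof.
elim: Q y => [|y' Q IH] y monos.
  by have [mono_y ? ?] := monos y (or_introl erefl); exists (atgt y); rewrite //= mono_y.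
have [e pc_e [Pe e_gt0]] := IH y' (fun z hz => monos z (or_intror hz)).
have [mono_y _ _] := monos y (or_introl erefl).
exists e => //; rewrite pcomp_cons pc_e mono_y /= ifT; last lia.
by rewrite addnK.
Qed.

(* Composing [beta] with epis on one side and monos on the other keeps the
   index [1] of the D-map, by the formulas in [comp]. *)
Lemma pcomp_epis_D_monos n (PC PD : obj -> Prop) beta P Q :
  amor beta = (KD, 1) ->
  (forall x, List.In x P -> epi_arrow x /\ PC (asrc x)) ->
  (forall y, List.In y Q -> [/\ mono_arrow y, PD (atgt y) & 0 < (atgt y).2]) ->
  (forall D C, D = atgt beta \/ PD D -> C = asrc beta \/ PC C -> homD_idx n D C 1) ->
  Defs.pcomp n (P ++ beta :: Q) <> None.
Proof.
move=> mor_b epis monos homD.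
suff [e -> _] : exists2 e, Defs.pcomp n (P ++ beta :: Q) = Some (e, (KD, 1)) &
  e = atgt beta \/ PD e by [].
elim: P epis => [|x P IH] epis.
  rewrite cat0s; case: Q monos => [|y Q] monos.
    by exists (atgt beta); [rewrite /= mor_b | left].
  have [e pc_e [PDe _]] := pcomp_monos n monos.
  by exists e; [rewrite pcomp_cons pc_e mor_b /= addnK homD; [| right | left] | right].
have [e pc_e e_ok] := IH (fun z hz => epis z (or_intror hz)).
have [epi_x PCx] := epis x (or_introl erefl).
exists e => //; rewrite cat_cons; move: pc_e; case: (P ++ beta :: Q) => // z R pc_e.
by rewrite pcomp_cons pc_e epi_x /= addnK homD //; right.
Qed.

Lemma is_string_cat_Darrow n T s W beta (PC PD : obj -> Prop) :
  is_string n T s -> is_string n T (atgt beta, W) -> is_arrow n T beta ->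
  asrc beta = wend s -> amor beta = (KD, 1) ->
  ~ List.In (beta, false) s.2 -> ~ List.In (beta, false) W ->
  (forall i, all snd (drop i s.2) -> forall x, List.In x (drop i s.2) ->
     epi_arrow x.1 /\ PC (asrc x.1)) ->
  (forall k, all snd (take k W) -> forall y, List.In y (take k W) ->
     [/\ mono_arrow y.1, PD (atgt y.1) & 0 < (atgt y.1).2]) ->
  (forall D C, D = atgt beta \/ PD D -> C = asrc beta \/ PC C -> homD_idx n D C 1) ->
  is_string n T (s.1, s.2 ++ (beta, true) :: W).
Proof.
case=> T_s walk_s arr_s red_s zf_s [_ walk_W arr_W red_W zf_W] arr_b src_b mor_b
  nb_s nb_W epis monos homD.
split => //=.
- by apply/walk_from_cat; split.
- by move=> x /List.in_app_iff[/arr_s|[<-|/arr_W]].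
- exact: reduced_cat_letter.
apply: zero_free_cat_letter => // i k dir_s dir_W.
apply: (pcomp_epis_D_monos mor_b _ _ homD).
- by move=> x hx; have [y hy ->] := In_map hx; apply: epis dir_s _ hy.
- by move=> z hz; have [y hy ->] := In_map hz; apply: monos dir_W _ hy.
Qed.

Lemma direct_walk_backward (good : obj -> Prop) (Q : arrow -> Prop) v w :
  walk_from v w -> all snd w ->
  (forall x, List.In x w -> good (atgt x.1) -> Q x.1 /\ good (asrc x.1)) ->
  good (last v (map ltgt w)) ->
  (forall x, List.In x w -> Q x.1 /\ good (asrc x.1)) /\ good v.
Proof.
elim: w v => [|x w IH] v /=; first by [].
case=> src_x walk_w /andP[dir_x dir_w] step good_end.
have [Q_w good_x] := IH _ walk_w dir_w (fun y hy => step y (or_intror hy)) good_end.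
have [Q_x good_src] : Q x.1 /\ good (asrc x.1).
  by apply: step; [left | move: good_x; rewrite /ltgt dir_x].
split; first by move=> y [<-|/Q_w].
by rewrite -src_x /lsrc dir_x.
Qed.

Lemma direct_walk_forward (good : obj -> Prop) (Q : arrow -> Prop) v w :
  walk_from v w -> all snd w -> good v ->
  (forall x, List.In x w -> good (asrc x.1) -> Q x.1 /\ good (atgt x.1)) ->
  forall x, List.In x w -> Q x.1 /\ good (atgt x.1).
Proof.
elim: w v => [|x w IH] v //= [src_x walk_w] /andP[dir_x dir_w] good_v step.
have [Q_x good_tgt] : Q x.1 /\ good (atgt x.1).
  by apply: step; [left | move: good_v; rewrite -src_x /lsrc dir_x].
move=> y [<-|hy] //; apply: IH walk_w dir_w _ _ y hy; first by rewrite /ltgt dir_x.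
by move=> z hz; apply: step; right.
Qed.

Definition factors_in_addT n (T : seq obj) (X Y : obj) (f : mor) :=
  exists (Z : obj) g h,
    [/\ Z \in T, rad_mor n X Z g, rad_mor n Z Y h & Defs.comp n X Z Y g h = Some f].

Section Summands.
Variables (n : nat) (T : seq obj).
Hypotheses (n_gt1 : 1 < n) (T1 : (1, n.-1) \in T) (rT : rigid n T)
  (wT : forall Y : obj, Y \in T -> wing n Y).

(* The D-maps of index 1 out of and into the top summand factor through the
   D-loop at the top summand. *)
Lemma factors_D1_from_top (C : obj) : C \in T -> C <> (1, n.-1) -> C.1 + C.2 = n ->
  factors_in_addT n T (1, n.-1) C (KD, 1).
Proof.
move=> TC ne_C end_C; have [? ? ?] := wT TC.
have wC := wT TC; have wtop := wing_top n_gt1.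
exists (1, n.-1), (KD, 1), (KT, C.2); split => //.
- by split; [apply: (homD_idx_top n_gt1) => //=; lia | case].
- split; last by case=> E _; apply: ne_C.
  rewrite /valid_mor /=; have -> : C.2 = 1 + n.-1 - C.1 by lia.
  by apply: homT_idx_nested => /=; lia.
- by rewrite /= addnK (homD_idx_top n_gt1) //=; lia.
Qed.

Lemma factors_D1_into_top (D : obj) : D \in T -> D <> (1, n.-1) -> D.1 = 1 ->
  factors_in_addT n T D (1, n.-1) (KD, 1).
Proof.
move=> TD ne_D start_D; have [? ? ?] := wT TD.
have wD := wT TD; have wtop := wing_top n_gt1.
exists (1, n.-1), (KT, D.2), (KD, 1); split => //.
- split; last by case.
  rewrite /valid_mor /=; have -> : D.2 = D.1 + D.2 - 1 by lia.
  by apply: homT_idx_nested => /=; lia.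
- by split; [apply: (homD_idx_top n_gt1) => //=; lia | case].
- by rewrite /= addnK (homD_idx_top n_gt1) //=; lia.
Qed.

Definition pointed (R : obj -> Prop) p :=
  forall Y : obj, Y \in T -> R Y -> Y.1 <= p < Y.1 + Y.2.

Definition top_of (R : obj -> Prop) (A : obj) :=
  [/\ A \in T, R A & forall Y : obj, Y \in T -> R Y -> Y.2 <= A.2].

Lemma top_of_equiv (R R' : obj -> Prop) A :
  (forall Y : obj, Y \in T -> R Y <-> R' Y) -> top_of R A -> top_of R' A.
Proof.
move=> eqR [TA RA maxA]; split=> [//||Y TY /(eqR _ TY)]; first exact/eqR.
exact: maxA.
Qed.

Lemma top_of_nested R p (A Y : obj) : pointed R p -> top_of R A -> Y \in T -> R Y ->
  A.1 <= Y.1 /\ Y.1 + Y.2 <= A.1 + A.2.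
Proof.
move=> ptR [TA RA maxA] TY RY.
have := extC_zero_nested n_gt1 (rT TA TY) (wT TA) (wT TY) (ptR _ TA RA) (ptR _ TY RY).
by have := maxA _ TY RY; lia.
Qed.

Lemma irr_addT_right_aligned R p (A C C' : obj) f : pointed R p -> top_of R A ->
  C \in T -> R C -> C' \in T -> R C' -> C <> C' -> C.1 + C.2 = A.1 + A.2 ->
  irr_addT n T C C' f -> f = (KT, C'.2) /\ C'.1 + C'.2 = A.1 + A.2.
Proof.
move=> ptR topA TC RC TC' RC' ne_C end_C [_ _ [valid_f _] not_fact].
have [? ?] := top_of_nested ptR topA TC' RC'.
have ? := ptR _ TC RC; have ? := ptR _ TC' RC'; have [TA _ _] := topA.
have wA := wT TA; have wC := wT TC; have wC' := wT TC'.
case: f valid_f not_fact => -[] m; rewrite /valid_mor /= => hom_m not_fact.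
  by case: (homT_idx_wing n_gt1 wC wC' hom_m) => *; split; [congr pair|]; lia.
case: (homD_idx_wing n_gt1 wC wC' hom_m) => [?|[? [? ?]]].
  by exfalso; apply: (cross_extC n_gt1 (rT TC TC')); split; lia.
subst m; have eq_C : C = (1, n.-1).
  by case: wA => *; apply: injective_projections => /=; lia.
by subst C; case: not_fact; apply: factors_D1_from_top => // E; apply: ne_C.
Qed.

Lemma irr_addT_left_aligned R p (B D D' : obj) f : pointed R p -> top_of R B ->
  D \in T -> R D -> D' \in T -> R D' -> D <> D' -> D.1 = B.1 ->
  irr_addT n T D' D f -> f = (KT, D'.2) /\ D'.1 = B.1.
Proof.
move=> ptR topB TD RD TD' RD' ne_D start_D [_ _ [valid_f _] not_fact].
have [? ?] := top_of_nested ptR topB TD' RD'.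
have ? := ptR _ TD RD; have ? := ptR _ TD' RD'; have [TB _ _] := topB.
have wB := wT TB; have wD := wT TD; have wD' := wT TD'.
case: f valid_f not_fact => -[] m; rewrite /valid_mor /= => hom_m not_fact.
  by case: (homT_idx_wing n_gt1 wD' wD hom_m) => *; split; [congr pair|]; lia.
case: (homD_idx_wing n_gt1 wD' wD hom_m) => [?|[? [? ?]]].
  by exfalso; apply: (cross_extC n_gt1 (rT TD' TD)); split; lia.
subst m; have eq_D : D = (1, n.-1).
  by case: wB => *; apply: injective_projections => /=; lia.
by subst D; case: not_fact; apply: factors_D1_into_top => // E; apply: ne_D.
Qed.

End Summands.

Lemma comp_KD_cases n X Z Y g h m : Defs.comp n X Z Y g h = Some (KD, m) ->
  (g.1 = KT /\ h.1 = KD) \/ (g.1 = KD /\ h.1 = KT).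
Proof. by case: g h => -[] ? [[] ?] //=; [case: ifP | left | right]. Qed.

Section TopSummand.
Variables (n : nat) (T : seq obj).
Hypotheses (n_gt1 : 1 < n) (rT : rigid n T) (wT : forall Y : obj, Y \in T -> wing n Y)
  (maxT : forall Z : seq obj, all (valid_obj n) Z -> rigid n (T ++ Z) ->
     all (fun Y => Y \in T) Z).

Lemma wing_compatible_mem (Z : obj) : wing n Z ->
  (forall Y : obj, Y \in T -> ~ cross Z Y /\ ~ cross Y Z) -> Z \in T.
Proof.
move=> wZ compat; have := @maxT [:: Z]; rewrite /= !andbT; apply.
  by case: wZ => *; apply/andP; split; [apply/andP; split|]; lia.
move=> Y1 Y2; rewrite !mem_cat !mem_seq1 => /orP[TY1|/eqP->] /orP[TY2|/eqP->].
- exact: rT.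
- by have [? ?] := compat _ TY1; apply: extC_zero_wing => //; apply: wT.
- by have [? ?] := compat _ TY2; apply: extC_zero_wing => //; apply: wT.
- by apply: extC_zero_wing => // -[/= *]; lia.
Qed.

Lemma not_factors_D1_top : ~ factors_in_addT n T (1, n.-1) (1, n.-1) (KD, 1).
Proof.
have wtop := wing_top n_gt1.
case=> Z [[kg ig] [[kh ih] [TZ [val_g ng] [val_h nh] /comp_KD_cases]]].
have wZ := wT TZ; have [? ? ?] := wZ; rewrite /valid_mor /= in val_g val_h.
case=> -[/= ? ?]; subst kg kh.
- have [/= ? ? ? ?] := homT_idx_wing n_gt1 wtop wZ val_g.
  case: (homD_idx_wing n_gt1 wZ wtop val_h) => /= ?; first lia.
  have eZ : Z = (1, n.-1) by apply: injective_projections => /=; lia.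
  by subst Z; apply: ng; split => //; congr pair; lia.
- case: (homD_idx_wing n_gt1 wtop wZ val_g) => /= ?; first lia.
  have [/= ? ? ? ?] := homT_idx_wing n_gt1 wZ wtop val_h.
  have eZ : Z = (1, n.-1) by apply: injective_projections => /=; lia.
  by subst Z; apply: nh; split => //; congr pair; lia.
Qed.

End TopSummand.

Section Regular.
Variables (n : nat) (T : seq obj) (x c : nat) (A B : obj).
Hypotheses (n_gt1 : 1 < n) (rT : rigid n T) (wT : forall Y : obj, Y \in T -> wing n Y)
  (maxT : forall Z : seq obj, all (valid_obj n) Z -> rigid n (T ++ Z) ->
     all (fun Y => Y \in T) Z)
  (x_gt0 : 0 < x) (xc_lt : x + c < n).

(* [R^T(X)] and [R^D(X)] among the summands of [T], for [X = (x, c)] with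
   [x + c < n]. *)
Definition RT_wing (Y : obj) := Y.1 <= x < Y.1 + Y.2 /\ Y.1 + Y.2 <= x + c.
Definition RD_wing (Y : obj) := x + 2 <= Y.1 <= x + c + 1 /\ x + c + 2 <= Y.1 + Y.2.

Hypotheses (topA : top_of T RT_wing A) (topB : top_of T RD_wing B).

(* If the interval between [A] and [B] were wider, the summand filling it
   would be compatible with [T] and longer than [A]. *)
Lemma top_D_adjacent : B.1 = A.1 + A.2 + 1.
Proof.
have [TA [? ?] maxA] := topA; have [TB [? ?] maxB] := topB.
have [? ? ?] := wT TA; have [? ? ?] := wT TB.
case: (leqP B.1 (A.1 + A.2)) => ?.
  by exfalso; apply: (cross_extC n_gt1 (rT TB TA)); split; lia.
case: (leqP B.1 (A.1 + A.2 + 1)) => ?; first lia.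
pose Z : obj := (A.1, B.1 - 1 - A.1).
suff TZ : Z \in T by have := maxA _ TZ; rewrite /RT_wing /=; lia.
apply: (wing_compatible_mem n_gt1 rT wT maxT) => [|Y TY]; first by split => /=; lia.
have [? ? ?] := wT TY; split => -[/= ? ? ? ?].
- case: (leqP (A.1 + A.2) (Y.1 + Y.2)) => ?.
    by have := maxA _ TY; rewrite /RT_wing; lia.
  by apply: (cross_extC n_gt1 (rT TA TY)); split; lia.
- case: (leqP (B.1 + B.2) (Y.1 + Y.2)) => ?; last first.
    by apply: (cross_extC n_gt1 (rT TB TY)); split; lia.
  case: (leqP (x + 2) Y.1) => ?; first by have := maxB _ TY; rewrite /RD_wing; lia.
  by apply: (cross_extC n_gt1 (rT TY TA)); split; lia.
Qed.

Lemma not_factors_D1_regular : ~ factors_in_addT n T B A (KD, 1).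
Proof.
have [TA [? ?] maxA] := topA; have [TB [? ?] maxB] := topB.
have wA := wT TA; have wB := wT TB; have adj := top_D_adjacent.
case=> Z [[kg ig] [[kh ih] [TZ [val_g ng] [val_h nh] /comp_KD_cases]]].
have wZ := wT TZ; rewrite /valid_mor /= in val_g val_h.
case=> -[/= ? ?]; subst kg kh.
- have [? ? ? ?] := homT_idx_wing n_gt1 wB wZ val_g.
  case: (homD_idx_wing n_gt1 wZ wA val_h) => ?; last lia.
  have eZ : Z = B.
    by have := maxB _ TZ; rewrite /RD_wing => ?; apply: injective_projections; lia.
  by subst Z; apply: ng; split => //; congr pair; lia.
- case: (homD_idx_wing n_gt1 wB wZ val_g) => ?; last lia.
  have [? ? ? ?] := homT_idx_wing n_gt1 wZ wA val_h.
  have eZ : Z = A.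
    by have := maxA _ TZ; rewrite /RT_wing => ?; apply: injective_projections; lia.
  by subst Z; apply: nh; split => //; congr pair; lia.
Qed.

End Regular.

Section Sigma.
Variables (n : nat) (T : seq obj).
Hypotheses (n_gt1 : 1 < n) (T1 : (1, n.-1) \in T) (rT : rigid n T)
  (wT : forall Y : obj, Y \in T -> wing n Y).

Lemma sigma_top R s : is_sigma n T R s -> top_of T R (wend s).
Proof. by case=> _ _ verts maxs; have [? ?] := (verts _).1 (mem_last _ _); split. Qed.

Lemma sigma_arrow_ends R s x : is_sigma n T R s -> List.In x s.2 ->
  [/\ asrc x.1 \in wverts s, atgt x.1 \in wverts s & asrc x.1 <> atgt x.1].
Proof. by case=> -[_ walk_s _ _ _] uniq_s _ _; apply: walk_arrow_ends. Qed.

Lemma sigma_direct_suffix_epis R p s : pointed T R p -> is_sigma n T R s ->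
  forall i, all snd (drop i s.2) -> forall x, List.In x (drop i s.2) ->
  epi_arrow x.1 /\
  (asrc x.1 \in wverts s /\ (asrc x.1).1 + (asrc x.1).2 = (wend s).1 + (wend s).2).
Proof.
move=> ptR sig i dir x x_in; have topA := sigma_top sig.
have [[_ walk_s arr_s _ _] _ verts _] := sig.
move: walk_s; rewrite -{1}(cat_take_drop i s.2) walk_from_cat => -[_ walk_d].
pose good (C : obj) := C \in wverts s /\ C.1 + C.2 = (wend s).1 + (wend s).2.
have step y : List.In y (drop i s.2) -> good (atgt y.1) -> epi_arrow y.1 /\ good (asrc y.1).
  move=> y_in [tgt_in end_y]; have y_in_s := In_drop y_in.
  have [src_in _ ne] := sigma_arrow_ends sig y_in_s.
  have [Tsrc Rsrc] := (verts _).1 src_in; have [Ttgt Rtgt] := (verts _).1 tgt_in.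
  by have [] := irr_addT_right_aligned n_gt1 T1 rT wT ptR topA Ttgt Rtgt Tsrc Rsrc
    (nesym ne) end_y (arr_s _ y_in_s).
have end_good : good (last (last s.1 (map ltgt (take i s.2))) (map ltgt (drop i s.2))).
  by rewrite -last_cat -map_cat cat_take_drop; split => //; apply: mem_last.
by have [+ _] := direct_walk_backward walk_d dir step end_good; apply.
Qed.

Lemma sigma_winv_direct_prefix_monos R p s : pointed T R p -> is_sigma n T R s ->
  forall k, all snd (take k (winv s).2) -> forall y, List.In y (take k (winv s).2) ->
  [/\ mono_arrow y.1, atgt y.1 \in wverts s /\ (atgt y.1).1 = (wend s).1 &
      0 < (atgt y.1).2].
Proof.
move=> ptR sig k dir y y_in; have topB := sigma_top sig.
have [[_ walk_s arr_s _ _] _ verts _] := sig.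
have := walk_from_winv walk_s; rewrite -(cat_take_drop k (map flip (rev s.2))).
rewrite walk_from_cat => -[walk_p _].
pose good (C : obj) := C \in wverts s /\ C.1 = (wend s).1.
have step z : List.In z (take k (winv s).2) -> good (asrc z.1) ->
    mono_arrow z.1 /\ good (atgt z.1).
  move=> z_in; have [w /In_rev w_in ->] := In_map (In_take z_in).
  case=> src_in start_z; have [_ tgt_in ne] := sigma_arrow_ends sig w_in.
  have [Tsrc Rsrc] := (verts _).1 src_in; have [Ttgt Rtgt] := (verts _).1 tgt_in.
  by have [] := irr_addT_left_aligned n_gt1 T1 rT wT ptR topB Tsrc Rsrc Ttgt Rtgt
    ne start_z (arr_s _ w_in).
have start_good : good (wend s) by split => //; apply: mem_last.
have [mono_y [tgt_in ?]] := direct_walk_forward walk_p dir start_good step y_in.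
by split => //; have [? ? ?] := wT ((verts _).1 tgt_in).1.
Qed.

Definition Darrow_joins (sT sD : walk) := exists beta : arrow,
  [/\ is_Darrow n T beta, asrc beta = wend sT, atgt beta = wend sD &
      is_string n T (sT.1, sT.2 ++ (beta, true) :: (winv sD).2)].

Lemma sigma_cat_Darrow R1 R2 p1 p2 sT sD :
  pointed T R1 p1 -> pointed T R2 p2 -> is_sigma n T R1 sT -> is_sigma n T R2 sD ->
  ~ factors_in_addT n T (wend sD) (wend sT) (KD, 1) ->
  (forall C D : obj, C \in T -> D \in T -> C.1 + C.2 = (wend sT).1 + (wend sT).2 ->
     D.1 = (wend sD).1 -> homD_idx n D C 1) ->
  (R1 (wend sD) -> wend sT = wend sD) -> (R2 (wend sT) -> wend sT = wend sD) ->
  Darrow_joins sT sD.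
Proof.
move=> pt1 pt2 sig1 sig2 not_fact homD1 same1 same2.
have [TA RA _] := sigma_top sig1; have [TB RB _] := sigma_top sig2.
pose beta := Arrow (wend sT) (wend sD) (KD, 1).
have arr_b : is_arrow n T beta by split=> //; split=> [|[]]; [apply: homD1 | ].
exists beta; split => //.
have [str1 _ verts1 _] := sig1; have [str2 _ verts2 _] := sig2.
have str2' : is_string n T (atgt beta, (winv sD).2) := is_string_winv str2 TB.
apply: (is_string_cat_Darrow
  (PC := fun C => C \in wverts sT /\ C.1 + C.2 = (wend sT).1 + (wend sT).2)
  (PD := fun D => D \in wverts sD /\ D.1 = (wend sD).1) str1 str2' arr_b erefl erefl).
- move=> /(sigma_arrow_ends sig1) [_ /verts1[_ R1B] ne].
  by apply: ne; apply: same1.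
- move=> hin; have [[b tf] /In_rev b_in] := In_map hin.
  case: tf b_in => b_in //= [eb]; subst b.
  have [/verts2[_ R2A] _ ne] := sigma_arrow_ends sig2 b_in.
  by apply: ne; apply: same2.
- exact: sigma_direct_suffix_epis pt1 sig1.
- exact: sigma_winv_direct_prefix_monos pt2 sig2.
- move=> D C [->|[/verts2[TD _] eD]] [->|[/verts1[TC _] eC]]; apply: homD1 => //.
Qed.

End Sigma.

Section Lemma4p7.
Variables (n : nat) (T : seq obj) (X : obj) (sT sD : walk).
Hypotheses (n_gt1 : 1 < n) (rT : rigid n T) (vT : all (valid_obj n) T)
  (maxT : forall Z : seq obj, all (valid_obj n) Z -> rigid n (T ++ Z) ->
     all (fun Y => Y \in T) Z)
  (T1 : (1, n.-1) \in T) (X_valid : valid_obj n X) (X_lt : X.1 + X.2 < 2 * n)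
  (sigT : is_sigma n T (inRT n X) sT) (sigD : is_sigma n T (inRD n X) sD).

Let wT (Y : obj) : Y \in T -> wing n Y := rigid_wing n_gt1 rT vT T1.

Lemma inRT_summandE (Y : obj) : Y \in T -> inRT n X Y <-> RT_wing X.1 X.2 Y.
Proof.
move=> TY; have /andP[? _] := X_valid.
by apply: (inRT_wingE n_gt1 (wT TY)) => //; lia.
Qed.

Lemma Darrow_joins_regular : X.1 + X.2 < n -> Darrow_joins n T sT sD.
Proof.
move=> reg; have /andP[/andP[x_gt0 ?] ?] := X_valid.
have inRD_summandE (Y : obj) : Y \in T -> inRD n X Y <-> RD_wing X.1 X.2 Y.
  by move=> TY; apply: (inRD_wingE n_gt1 (wT TY)).
have topA := top_of_equiv inRT_summandE (sigma_top sigT).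
have topB := top_of_equiv inRD_summandE (sigma_top sigD).
have [[TA [? ?] _] [TB [? ?] _]] := (topA, topB).
have adj := top_D_adjacent n_gt1 rT wT maxT x_gt0 reg topA topB.
have ptT : pointed T (inRT n X) X.1 by move=> Y TY /(inRT_summandE TY) [].
have ptD : pointed T (inRD n X) (X.1 + X.2 + 1).
  by move=> Y TY /(inRD_summandE _ TY); rewrite /RD_wing; lia.
apply: (sigma_cat_Darrow n_gt1 T1 rT wT ptT ptD sigT sigD).
- exact: (not_factors_D1_regular n_gt1 rT wT maxT x_gt0 reg topA topB).
- move=> C D TC TD ? ?; have [? ? ?] := wT TC; have [? ? ?] := wT TD.
  have -> : 1 = C.1 + C.2 + 2 - D.1 by lia.
  by apply: homD_idx_nested; lia.
- by move/(inRT_summandE TB); rewrite /RT_wing; lia.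
- by move/(inRD_summandE _ TA); rewrite /RD_wing; lia.
Qed.

Lemma Darrow_joins_wrap : n <= X.1 + X.2 -> Darrow_joins n T sT sD.
Proof.
move=> wrap; have /andP[/andP[? ?] ?] := X_valid.
have [TA RA maxA] := sigma_top sigT; have [TB RB maxB] := sigma_top sigD.
have [? ? ?] := wT TA; have [? ? ?] := wT TB.
have [/andP[? ?] ?] := (inRT_summandE TA).1 RA.
have eA : wend sT = (1, n.-1).
  have RT1 : inRT n X (1, n.-1) by apply/(inRT_summandE T1); rewrite /RT_wing /=; lia.
  by have /= ? := maxA _ T1 RT1; apply: injective_projections => /=; lia.
have ptD : pointed T (inRD n X) (X.1 + X.2 - n + 1).
  by move=> Y TY; apply: (inRD_wrap n_gt1 (wT TY)); lia.
have /andP[? ?] := ptD _ TB RB.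
have eB : wend sD = (1, n.-1).
  have RD1 : inRD n X (1, n.-1) by apply: inRD_top; lia.
  by have /= ? := maxB _ T1 RD1; apply: injective_projections => /=; lia.
have ptT : pointed T (inRT n X) X.1 by move=> Y TY /(inRT_summandE TY) [].
apply: (sigma_cat_Darrow n_gt1 T1 rT wT ptT ptD sigT sigD); rewrite ?eA ?eB //.
- exact: (not_factors_D1_top n_gt1 wT).
- move=> C D TC TD /= ? ?; apply: (homD_idx_top n_gt1 (wT TD) (wT TC)) => //=; lia.
Qed.

End Lemma4p7.

Unset Implicit Arguments.

Theorem lemma4p7 (n : nat) (T : seq obj) (X : obj) (sT sD : walk) :
  2 <= n ->
  basic_maximal_rigid n T ->
  (1, n.-1) \in T ->
  inF n X ->
  is_sigma n T (inRT n X) sT ->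
  is_sigma n T (inRD n X) sD ->
  exists beta : arrow,
    [/\ is_Darrow n T beta, asrc beta = wend sT, atgt beta = wend sD &
        is_string n T (sT.1, sT.2 ++ (beta, true) :: (winv sD).2)].
Proof.
move=> n_gt1 [_ _ vT rT maxT] T1 [X_valid X_F] sigT sigD.
have X_lt : X.1 + X.2 < 2 * n.
  by have /andP[/andP[_ ?] _] := X_valid; case: X_F => ?; lia.
case: (ltnP (X.1 + X.2) n) => [reg|wrap].
- exact: (Darrow_joins_regular n_gt1 rT vT maxT T1 X_valid X_lt sigT sigD reg).
- exact: (Darrow_joins_wrap n_gt1 rT vT T1 X_valid X_lt sigT sigD wrap).
Qed.
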